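(* With the matrices defined in the context, the Neumann Schur complement $S_N:=\mathbf{B}\mathbf{A_N}^{-1}\mathbf{B}^T$ satisfies $S_N^\dagger=S_N$.
   Context: Fix an integer $n\ge 2$ and set $h=1/n$. Let $I_m$ denote the $m\times m$ identity matrix and $\otimes$ the Kronecker product. Let $\mathrm{B}\in\mathbb{R}^{n\times(n-1)}$ be $\mathrm{B}=\frac1h M$, where $M_{i,i}=1$ and $M_{i+1,i}=-1$ for $1\le i\le n-1$, all other entries $0$. Define $\mathrm{B}^u_x=I_n\otimes \mathrm{B}$, $\mathrm{B}^v_y=\mathrm{B}\otimes I_n$, $\mathrm{B}^q_x=I_{n-1}\otimes\mathrm{B}$, $\mathrm{B}^q_y=\mathrm{B}\otimes I_{n-1}$. Let $\mathbf{B}=\begin{bmatrix}-\mathrm{B}^u_x & -\mathrm{B}^v_y\end{bmatrix}\in\mathbb{R}^{n^2\times 2n(n-1)}$ and $\mathbf{C}=\begin{bmatrix}-(\mathrm{B}^q_y)^T & (\mathrm{B}^q_x)^T\end{bmatrix}\in\mathbb{R}^{(n-1)^2\times 2n(n-1)}$, and let $\mathbf{A_N}=\mathbf{B}^T\mathbf{B}+\mathbf{C}^T\mathbf{C}$ (which is invertible). The superscript $\dagger$ denotes the Moore–Penrose pseudoinverse. *)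

From mathcomp Require Import all_boot all_order all_algebra.
From mathcomp Require Import boolp classical_sets reals.
Set Implicit Arguments. Unset Strict Implicit. Unset Printing Implicit Defensive.
Import Order.TTheory GRing.Theory Num.Theory.
Local Open Scope ring_scope.

(* ---------- Kronecker product with the standard index convention ----------
   (A ⊗ B)_{(a p + c), (b q + d)} = A_{a b} * B_{c d},
   for A : m x n, B : p x q, 0-based row index i = a*p + c, column j = b*q + d. *)

Lemma kron_div_lt (m p : nat) (i : 'I_(m * p)) : (i %/ p < m)%N.
Proof.
case: p i => [|p] i; first by case: i => i; rewrite muln0.
by rewrite ltn_divLR // ltn_ord.
Qed.

Lemma kron_mod_lt (m p : nat) (i : 'I_(m * p)) : (i %% p < p)%N.
Proof.
case: p i => [|p] i; first by case: i => i; rewrite muln0.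
by rewrite ltn_mod.
Qed.

Definition kdiv (m p : nat) (i : 'I_(m * p)) : 'I_m := Ordinal (kron_div_lt i).
Definition kmod (m p : nat) (i : 'I_(m * p)) : 'I_p := Ordinal (kron_mod_lt i).

Definition kron (R : pzRingType) (m n p q : nat)
  (A : 'M[R]_(m, n)) (B : 'M[R]_(p, q)) : 'M[R]_(m * p, n * q) :=
  \matrix_(i, j) (A (kdiv i) (kdiv j) * B (kmod i) (kmod j)).

Definition is_MP_pinv (R : realType) (m n : nat)
  (A : 'M[R]_(m, n)) (X : 'M[R]_(n, m)) : Prop :=
  [/\ A *m X *m A = A, X *m A *m X = X,
      (A *m X)^T = A *m X & (X *m A)^T = X *m A].

(* The pseudoinverse A^† : the (unique, existing) matrix satisfying the
   Penrose conditions, selected by classical choice. *)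
Definition pinv (R : realType) (m n : nat) (A : 'M[R]_(m, n)) : 'M[R]_(n, m) :=
  xget 0 [set X | is_MP_pinv A X].

Section Mats.
Variables (R : realType) (n : nat).

(* M in R^{n x (n-1)}: M_{i,i} = 1, M_{i+1,i} = -1 (1-based), i.e. 0-based
   M i j = 1 if i = j, -1 if i = j+1, 0 otherwise. *)
Definition Mdiff : 'M[R]_(n, n.-1) :=
  \matrix_(i, j) ((i == j :> nat)%:R - (i == j.+1 :> nat)%:R).

(* B = (1/h) M with h = 1/n *)
Definition Bd : 'M[R]_(n, n.-1) := (1 / (1 / n%:R)) *: Mdiff.

Definition Bux : 'M[R]_(n * n, n * n.-1) := kron (1%:M : 'M[R]_n) Bd.
Definition Bvy : 'M[R]_(n * n, n.-1 * n) := kron Bd (1%:M : 'M[R]_n).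
Definition Bqx : 'M[R]_(n.-1 * n, n.-1 * n.-1) := kron (1%:M : 'M[R]_n.-1) Bd.
Definition Bqy : 'M[R]_(n * n.-1, n.-1 * n.-1) := kron Bd (1%:M : 'M[R]_n.-1).

Definition Bbold : 'M[R]_(n * n, n * n.-1 + n * n.-1) :=
  row_mx (- Bux) (castmx (erefl _, mulnC n.-1 n) (- Bvy)).

Definition Cbold : 'M[R]_(n.-1 * n.-1, n * n.-1 + n * n.-1) :=
  row_mx (- Bqy^T) (castmx (erefl _, mulnC n.-1 n) (Bqx^T)).

Definition AN : 'M[R]_(n * n.-1 + n * n.-1) := Bbold^T *m Bbold + Cbold^T *m Cbold.

Definition SN : 'M[R]_(n * n) := Bbold *m invmx AN *m Bbold^T.

End Mats.

From mathcomp Require Import all_boot all_order all_algebra.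
From mathcomp Require Import boolp classical_sets reals.
From mathcomp Require Import ring zify.
Set Implicit Arguments. Unset Strict Implicit. Unset Printing Implicit Defensive.
Import Order.TTheory GRing.Theory Num.Theory.
Local Open Scope ring_scope.

(* A_N = B^T B + C^T C where the discrete curl C annihilates the
   discrete gradient: C B^T = 0.  Then X := A_N^{-1} B^T satisfies
   C^T C X = 0, hence B^T B X = B^T, which makes S_N = B X a symmetric
   idempotent, i.e. an orthogonal projection; an orthogonal projection
   satisfies the Penrose conditions with itself, and the pseudoinverse is
   the unique solution of those conditions. *)

Lemma kpair_lt (a b : nat) (i : 'I_a) (j : 'I_b) : (i * b + j < a * b)%N.
Proof. have := ltn_ord i; have := ltn_ord j; nia. Qed.

Definition kpair (a b : nat) (i : 'I_a) (j : 'I_b) : 'I_(a * b) :=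
  Ordinal (kpair_lt i j).

Lemma kdiv_kpair a b (i : 'I_a) (j : 'I_b) : kdiv (kpair i j) = i.
Proof.
apply: val_inj => /=; have jb := ltn_ord j.
by rewrite divnMDl ?divn_small ?addn0 //; lia.
Qed.

Lemma kmod_kpair a b (i : 'I_a) (j : 'I_b) : kmod (kpair i j) = j.
Proof. by apply: val_inj => /=; rewrite modnMDl modn_small. Qed.

Lemma kpair_kdiv a b (k : 'I_(a * b)) : kpair (kdiv k) (kmod k) = k.
Proof. by apply: val_inj => /=; rewrite -divn_eq. Qed.

Lemma sum_kpair (V : nmodType) a b (F : 'I_(a * b) -> V) :
  \sum_(k < a * b) F k = \sum_(i < a) \sum_(j < b) F (kpair i j).
Proof.
rewrite pair_bigA /= (reindex (fun p : 'I_a * 'I_b => kpair p.1 p.2)) //=.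
exists (fun k => (kdiv k, kmod k)) => [[i j] _ | k _] /=.
  by rewrite kdiv_kpair kmod_kpair.
by rewrite kpair_kdiv.
Qed.

Definition vec (T : Type) a b (X : 'M[T]_(a, b)) : 'cV[T]_(a * b) :=
  \col_k X (kdiv k) (kmod k).
Definition unvec (T : Type) a b (v : 'cV[T]_(a * b)) : 'M[T]_(a, b) :=
  \matrix_(i, j) v (kpair i j) 0.

Lemma vecK (T : Type) a b (v : 'cV[T]_(a * b)) : vec (unvec v) = v.
Proof. by apply/matrixP => k z; rewrite !mxE kpair_kdiv ord1. Qed.

Lemma unvecK (T : Type) a b (X : 'M[T]_(a, b)) : unvec (vec X) = X.
Proof. by apply/matrixP => i j; rewrite !mxE kdiv_kpair kmod_kpair. Qed.

Section Kronecker.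
Variable R : comPzRingType.

Lemma kron_vec m n p q (A : 'M[R]_(m, n)) (B : 'M[R]_(p, q)) (X : 'M[R]_(n, q)) :
  kron A B *m vec X = vec (A *m X *m B^T).
Proof.
apply/matrixP => k z; rewrite /kron /vec !mxE sum_kpair.
under eq_bigr => i _ do under eq_bigr => j _ do rewrite !mxE kdiv_kpair kmod_kpair.
rewrite exchange_big /=; apply: eq_bigr => j _.
rewrite !mxE big_distrl /=; apply: eq_bigr => i _; ring.
Qed.

Lemma kron_mul m n p q r s (A : 'M[R]_(m, n)) (B : 'M[R]_(p, q))
  (C : 'M[R]_(n, r)) (D : 'M[R]_(q, s)) :
  kron A B *m kron C D = kron (A *m C) (B *m D).
Proof.
apply/matrixP => k l; rewrite !mxE sum_kpair big_distrl /=.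
apply: eq_bigr => i _; rewrite big_distrr /=; apply: eq_bigr => j _.
rewrite /kron !mxE kdiv_kpair kmod_kpair; ring.
Qed.

Lemma kron_tr m n p q (A : 'M[R]_(m, n)) (B : 'M[R]_(p, q)) :
  (kron A B)^T = kron A^T B^T.
Proof. by apply/matrixP => i j; rewrite !mxE. Qed.

Lemma castmx_mulr p q q' r (e : q = q') (M : 'M[R]_(p, q)) (x : 'M[R]_(q', r)) :
  castmx (erefl p, e) M *m x = M *m castmx (esym e, erefl r) x.
Proof. by case: q' / e x => x; rewrite !castmx_id. Qed.

Lemma castmx_mul2 p q q' r (e : q = q') (M : 'M[R]_(p, q)) (N : 'M[R]_(q, r)) :
  castmx (erefl p, e) M *m castmx (e, erefl r) N = M *m N.
Proof. by case: q' / e; rewrite !castmx_id. Qed.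

Lemma castmx_mull p p' q r (e : p = p') (M : 'M[R]_(p, q)) (x : 'M[R]_(q, r)) :
  castmx (e, erefl q) M *m x = castmx (e, erefl r) (M *m x).
Proof. by case: p' / e; rewrite !castmx_id. Qed.

Lemma castmxN m1 m2 n1 n2 (e : (m1 = m2) * (n1 = n2)) (A : 'M[R]_(m1, n1)) :
  castmx e (- A) = - castmx e A.
Proof. by apply/matrixP => i j; rewrite !(castmxE, mxE). Qed.

End Kronecker.

Section Gram.
Variable R : realDomainType.

(* Over an ordered field the Gram matrix M^T M determines whether M = 0:
   its diagonal entries are the sums of squares of the columns of M. *)
Lemma gram_eq0 k l (M : 'M[R]_(k, l)) : M^T *m M = 0 -> M = 0.
Proof.
move=> MM0; apply/matrixP => i j; rewrite mxE.
have col_sq0 : \sum_(t < k) M t j * M t j = 0.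
  by have /matrixP /(_ j j) := MM0; rewrite !mxE; under eq_bigr do rewrite mxE.
have sq_ge0 (t : 'I_k) : true -> 0 <= M t j * M t j by rewrite -expr2 sqr_ge0.
by move/eqP: (psumr_eq0P sq_ge0 col_sq0 (i := i) isT); rewrite mulf_eq0 orbb => /eqP.
Qed.

Lemma gram_sum_ker k p q (B : 'M[R]_(p, k)) (C : 'M[R]_(q, k)) (v : 'cV[R]_k) :
  (B^T *m B + C^T *m C) *m v = 0 -> B *m v = 0 /\ C *m v = 0.
Proof.
move=> Av0; have w0 : col_mx (B *m v) (C *m v) = 0.
  apply: gram_eq0; rewrite tr_col_mx mul_row_col !trmx_mul.
  by rewrite -[RHS](mulmx0 _ v^T) -Av0 mulmxDl mulmxDr !mulmxA.
by move/eqP: w0; rewrite col_mx_eq0 => /andP[/eqP ? /eqP ?].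
Qed.

End Gram.

Lemma unitmx_ker0 (F : fieldType) m (A : 'M[F]_m) :
  (forall v : 'cV[F]_m, A *m v = 0 -> v = 0) -> A \in unitmx.
Proof.
move=> ker0; rewrite -unitmx_tr -row_free_unit; apply: inj_row_free => v vA0.
apply: trmx_inj; rewrite trmx0; apply: ker0.
by have := congr1 trmx vA0; rewrite trmx_mul trmxK trmx0.
Qed.

Section Penrose.
Variable R : realType.

Lemma mp_unique m n (A : 'M[R]_(m, n)) X Y :
  is_MP_pinv A X -> is_MP_pinv A Y -> X = Y.
Proof.
case=> [X1 X2 X3 X4] [Y1 Y2 Y3 Y4].
have eX : X = X *m A *m Y.
  have XA : X = X *m X^T *m A^T by rewrite -mulmxA -trmx_mul X3 mulmxA X2.
  have XAY : X *m X^T *m A^T = X *m (A *m X)^T *m (A *m Y)^T.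
    by rewrite -{1}Y1 !trmx_mul !mulmxA.
  by rewrite {1}XA XAY X3 Y3 !mulmxA X2.
have eY : Y = X *m A *m Y.
  have AY : Y = A^T *m Y^T *m Y by rewrite -trmx_mul Y4 Y2.
  have XAY : A^T *m Y^T *m Y = (X *m A)^T *m (Y *m A)^T *m Y.
    by rewrite -{1}X1 !trmx_mul !mulmxA.
  by rewrite {1}AY XAY X4 Y4 -!mulmxA (mulmxA Y A Y) Y2.
by rewrite eX -eY.
Qed.

Lemma pinv_eq m n (A : 'M[R]_(m, n)) X : is_MP_pinv A X -> pinv A = X.
Proof.
by move=> HX; apply: xget_unique => // Y HY; exact: mp_unique HY HX.
Qed.

Lemma proj_pinv m (P : 'M[R]_m) : P^T = P -> P *m P = P -> pinv P = P.
Proof. by move=> PT PP; apply: pinv_eq; split; rewrite ?PP ?PT. Qed.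

(* Abstract form of the theorem: if A = B^T B + C^T C is invertible and
   C B^T = 0, the Schur complement B A^{-1} B^T is an orthogonal projection,
   hence its own pseudoinverse. *)
Lemma schur_pinv k p q (A : 'M[R]_k) (B : 'M[R]_(p, k)) (C : 'M[R]_(q, k)) :
  A = B^T *m B + C^T *m C -> A \in unitmx -> C *m B^T = 0 ->
  pinv (B *m invmx A *m B^T) = B *m invmx A *m B^T.
Proof.
move=> defA uA CB0; rewrite -mulmxA; set X := invmx A *m B^T.
have AX : A *m X = B^T by rewrite /X mulmxA mulmxV // mul1mx.
have CCX : C^T *m C *m X = 0.
  have C3X : C *m C^T *m (C *m X) = 0.
    have : C *m (A *m X) = 0 by rewrite AX.
    by rewrite defA mulmxDl mulmxDr !mulmxA CB0 !mul0mx add0r.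
  apply: gram_eq0.
  have -> : (C^T *m C *m X)^T *m (C^T *m C *m X)
            = (C *m X)^T *m (C *m C^T *m (C *m X)) by rewrite !trmx_mul !trmxK !mulmxA.
  by rewrite C3X mulmx0.
have BBX : B^T *m B *m X = B^T by rewrite -{2}AX defA mulmxDl CCX addr0.
have AT : A^T = A by rewrite defA linearD /= !trmx_mul !trmxK.
have ST : (B *m X)^T = B *m X by rewrite !trmx_mul trmxK trmx_inv AT mulmxA.
apply: proj_pinv => //.
by rewrite -{1}ST trmx_mul mulmxA -(mulmxA _ B^T) -(mulmxA _ (B^T *m B)) BBX
           -trmx_mul ST.
Qed.

End Penrose.

(* A discrete Poincare lemma for a "difference" matrix D with a left
   inverse T such that D T = 1 - e o and o D = 0 (o spans the constants,
   which D annihilates). *)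
Section Poincare.
Variables (R : comPzRingType) (p q : nat).
Variables (D : 'M[R]_(p, q)) (T : 'M[R]_(q, p)) (e : 'cV[R]_p) (o : 'rV[R]_p).
Hypotheses (TD : T *m D = 1%:M) (DT : D *m T = 1%:M - e *m o) (oD : o *m D = 0).

Lemma poincare_mx (U : 'M[R]_(p, q)) (W : 'M[R]_(q, p)) :
  W *m D = D^T *m U -> exists Psi : 'M[R]_p, Psi *m D = U /\ D^T *m Psi = W.
Proof.
move=> WD; exists (T^T *m (W *m e) *m o + U *m T); split.
  by rewrite mulmxDl -!mulmxA oD !mulmx0 add0r TD mulmx1.
rewrite mulmxDr !mulmxA -trmx_mul TD trmx1 mul1mx -WD -(mulmxA W D T) DT.
by rewrite mulmxBr mulmx1 !mulmxA addrC subrK.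
Qed.

End Poincare.

Section Indicators.
Variable R : comPzRingType.

Lemma sum_indicator (N k : nat) (F : nat -> R) :
  \sum_(j < N) F j * ((j : nat) == k)%:R = (k < N)%:R * F k.
Proof.
elim: N => [|N IH]; first by rewrite big_ord0 ltn0 mul0r.
rewrite big_ord_recr /= IH.
have [->|hk] := eqVneq k N; first by rewrite ltnn ltnSn mul0r add0r mulr1 mul1r.
by rewrite mulr0 addr0 ltnS (leq_eqVlt k) (negbTE hk).
Qed.

Lemma sum_indicator_succ (N i : nat) (F : nat -> R) :
  \sum_(j < N) F j * (i == (j : nat).+1)%:R = ((0 < i)%N && (i.-1 < N)%N)%:R * F i.-1.
Proof.
have e j : (i == j.+1) = ((j == i.-1) && (0 < i)%N).
  by case: i => [|i] /=; rewrite ?andbF // andbT eqSS eq_sym.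
under eq_bigr => j _ do rewrite e -mulnb natrM mulrA.
rewrite -mulr_suml sum_indicator -mulnb natrM; ring.
Qed.

End Indicators.

Section Difference.
Variable R : realType.

(* Case analysis on every boolean cast to a number, then linear arithmetic:
   this evaluates the 0/1 entries of products of the matrices below. *)
Ltac case_indicators :=
  repeat (match goal with |- context [ nat_of_bool ?b ] =>
    lazymatch b with true => fail | false => fail | _ => case: (boolP b) end end; intro);
  rewrite /=.

Definition summx n : 'M[R]_(n.-1, n) := \matrix_(j, b) (j < b)%:R.
Definition ones n : 'rV[R]_n := const_mx 1.
Definition e0 n : 'cV[R]_n := \col_i ((i : nat) == 0)%:R.

Lemma summx_Mdiff n : summx n *m Mdiff R n = - 1%:M.
Proof.
apply/matrixP => j b; rewrite !mxE.
under eq_bigr => i _ do rewrite !mxE mulrBr.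
rewrite sumrB (sum_indicator n b (fun i => (j < i)%:R)).
rewrite (sum_indicator n b.+1 (fun i => (j < i)%:R)).
have hb := ltn_ord b; have hj := ltn_ord j; rewrite -val_eqE /=.
case_indicators; try lia; ring.
Qed.

Lemma Mdiff_summx n : Mdiff R n *m summx n = e0 n *m ones n - 1%:M.
Proof.
apply/matrixP => i b; rewrite !mxE big_ord1 !mxE.
under eq_bigr => j _ do rewrite !mxE mulrBl.
rewrite sumrB.
under eq_bigr => j _ do rewrite mulrC eq_sym.
rewrite (sum_indicator n.-1 i (fun j => (j < b)%:R)).
under eq_bigr => j _ do rewrite mulrC.
rewrite (sum_indicator_succ n.-1 i (fun j => (j < b)%:R)).
have hb := ltn_ord b; have hi := ltn_ord i; rewrite -val_eqE /=.
case_indicators; try lia; ring.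
Qed.

Lemma ones_Mdiff n : ones n *m Mdiff R n = 0.
Proof.
apply/matrixP => z j; rewrite !mxE.
under eq_bigr => i _ do rewrite !mxE mul1r -[_%:R]mul1r -[X in _ - X]mul1r.
rewrite sumrB (sum_indicator n j (fun=> 1)) (sum_indicator n j.+1 (fun=> 1)).
have hj := ltn_ord j; case_indicators; try lia; ring.
Qed.

Lemma Bd_scale n : Bd R n = n%:R *: Mdiff R n.
Proof. by rewrite /Bd !div1r invrK. Qed.

Definition Bd_linv n : 'M[R]_(n.-1, n) := - n%:R^-1 *: summx n.

Lemma Bd_linvK n : (0 < n)%N -> Bd_linv n *m Bd R n = 1%:M.
Proof.
move=> n_gt0; have nz : n%:R != 0 :> R by rewrite pnatr_eq0 -lt0n.
rewrite Bd_scale /Bd_linv -scalemxAl -scalemxAr summx_Mdiff scalerA mulNr mulVf //.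
by rewrite scaleN1r opprK.
Qed.

Lemma Bd_linv_right n :
  (0 < n)%N -> Bd R n *m Bd_linv n = 1%:M - e0 n *m ones n.
Proof.
move=> n_gt0; have nz : n%:R != 0 :> R by rewrite pnatr_eq0 -lt0n.
rewrite Bd_scale /Bd_linv -scalemxAl -scalemxAr Mdiff_summx scalerA mulrN mulfV //.
by rewrite scaleN1r opprB.
Qed.

Lemma ones_Bd n : ones n *m Bd R n = 0.
Proof. by rewrite Bd_scale -scalemxAr ones_Mdiff scaler0. Qed.

End Difference.

Section Grid.
Variables (R : realType) (n : nat).

Lemma curl_grad : Cbold R n *m (Bbold R n)^T = 0.
Proof.
rewrite /Cbold /Bbold tr_row_mx mul_row_col trmx_cast /= castmx_mul2.
rewrite /Bux /Bvy /Bqx /Bqy !linearN /= mulNmx opprK.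
by rewrite -!trmx_mul !kron_mul !mul1mx !mulmx1 subrr.
Qed.

Lemma curl_free_grad (v : 'cV[R]_(n * n.-1 + n * n.-1)) :
  (0 < n)%N -> Cbold R n *m v = 0 -> exists x, v = (Bbold R n)^T *m x.
Proof.
(* Split v into its two components and view them as grid matrices U, W;
   the curl condition then reads W D = D^T U. *)
move=> n_gt0; rewrite -[v]vsubmxK; set u := usubmx v; set w := dsubmx v.
set w' := castmx (esym (mulnC n.-1 n), erefl 1%N) w.
have ww' : w = castmx (mulnC n.-1 n, erefl 1%N) w'.
  by apply/matrixP => i j; rewrite !castmxE; congr (w _ _); apply: val_inj.
set D := Bd R n; set U := unvec u; set W := unvec w'.
rewrite /Cbold mul_row_col castmx_mulr -/w' -(vecK u) -(vecK w') -/U -/W.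
rewrite /Bqx /Bqy -/D mulNmx !kron_tr !trmx1 !kron_vec trmx1 mulmx1 mul1mx trmxK.
move/eqP; rewrite addrC subr_eq0 => /eqP /(congr1 (@unvec _ _ _)); rewrite !unvecK.
(* A potential Psi for (U, W) gives v = - B^T vec Psi. *)
case/(poincare_mx (Bd_linvK R n_gt0) (Bd_linv_right R n_gt0) (ones_Bd R n)).
move=> Psi [PsiD DPsi]; exists (- vec Psi).
rewrite mulmxN /Bbold tr_row_mx trmx_cast /= mul_col_mx castmx_mull /Bux /Bvy -/D.
rewrite !linearN /= !mulNmx !kron_tr !trmx1 !kron_vec !trmx1 !mulmx1 !mul1mx trmxK.
by rewrite PsiD DPsi castmxN /U /W !vecK -ww' -opp_col_mx opprK.
Qed.

(* A_N has trivial kernel: a kernel vector is a curl-free gradient field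
   orthogonal to all gradients. *)
Lemma AN_ker0 (v : 'cV[R]_(n * n.-1 + n * n.-1)) :
  (0 < n)%N -> AN R n *m v = 0 -> v = 0.
Proof.
move=> n_gt0 /gram_sum_ker [Bv0 /(curl_free_grad n_gt0) [x defv]].
by apply: gram_eq0; rewrite {1}defv trmx_mul trmxK -mulmxA Bv0 mulmx0.
Qed.

Lemma AN_unit : (0 < n)%N -> AN R n \in unitmx.
Proof. by move=> n_gt0; apply: unitmx_ker0 => v; exact: AN_ker0. Qed.

End Grid.

Theorem corollary3 (R : realType) (n : nat) (hn : (2 <= n)%N) :
  pinv (SN R n) = SN R n.
Proof.
apply: schur_pinv (erefl (AN R n)) _ (curl_grad R n).
by apply: AN_unit; apply: leq_trans hn.
Qed.
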